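(* $\mathcal{B}$ and $\mathcal{B}_{\mathcal{U}}$ are weak quadratic algebras, and $\widehat{\mu}$ is a $q$-measure on the weak quadratic algebra $\mathcal{B}$ that extends $\mu$ (i.e. $\mathcal{C}\subseteq\mathcal{B}$ and $\widehat{\mu}=\mu$ on $\mathcal{C}$).
   Context: For $n\ge1$, $\Omega_n$ is the set of strings $\alpha_0\alpha_1\cdots\alpha_n$ with $\alpha_k\in\{0,1\}$, $\alpha_0=0$. For $\omega=\alpha_0\cdots\alpha_n$, $\omega'=\alpha'_0\cdots\alpha'_n\in\Omega_n$ let $D^n(\omega,\omega')=2^{-n}\prod_{k=1}^n i^{|\alpha_k-\alpha_{k-1}|}\prod_{k=1}^n i^{-|\alpha'_k-\alpha'_{k-1}|}\,\delta_{\alpha_n\alpha'_n}$ ($i=\sqrt{-1}$) and for $A\subseteq\Omega_n$, $\mu_n(A)=\sum_{\omega,\omega'\in A}D^n(\omega,\omega')$. $\Omega$ is the set of infinite sequences $\alpha_0\alpha_1\cdots$ with $\alpha_k\in\{0,1\}$, $\alpha_0=0$. A cylinder set is a set $\{\alpha_0\alpha_1\cdots\in\Omega:\alpha_0\cdots\alpha_n\in E\}$ with $E\subseteq\Omega_n$; $\mathcal{C}$ is the collection of cylinder sets and $\mu$ of such a set is $\mu_n(E)$ (well defined). For $A\subseteq\Omega$ and $n\ge0$, $A^{(n)}=\{\omega\in\Omega:\text{some }\omega'\in A\text{ has the same first }n+1\text{ entries as }\omega\}$. $A$ is beneficial if $\lim_n\mu(A^{(n)})$ exists and is finite, and then $\widehat{\mu}(A)=\lim_n\mu(A^{(n)})$;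 $\mathcal{B}$ is the collection of beneficial sets. $A$ is an upper set if $A=\bigcup_n\big(\Omega\setminus(\Omega\setminus A)^{(n)}\big)$; $\mathcal{U}$ is the collection of upper sets and $\mathcal{B}_{\mathcal{U}}=\{A\in\mathcal{U}:\lim_n\mu(\Omega\setminus(\Omega\setminus A)^{(n)})\text{ exists}\}$. Sets $A,B\subseteq\Omega$ are strongly disjoint if $A^{(n)}\cap B^{(n)}=\emptyset$ for some $n$. A collection $Q\subseteq 2^\Omega$ is a weak quadratic algebra if $\emptyset,\Omega\in Q$ and whenever $A,B,C\in Q$ are (pairwise) strongly disjoint with $A\cup B,A\cup C,B\cup C\in Q$, then $A\cup B\cup C\in Q$. A $q$-measure on a weak quadratic algebra $Q$ is a map $\nu:Q\to[0,\infty)$ such that for such $A,B,C$: $\nu(A\cup B\cup C)=\nu(A\cup B)+\nu(A\cup C)+\nu(B\cup C)-\nu(A)-\nu(B)-\nu(C)$. *)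

From HB Require Import structures.
From mathcomp Require Import all_boot all_order all_algebra.
From mathcomp Require Import all_classical all_reals all_analysis.
From mathcomp Require Import complex.
Import ComplexField.
Import numFieldNormedType.Exports.
Set Implicit Arguments. Unset Strict Implicit. Unset Printing Implicit Defensive.
Import Order.TTheory GRing.Theory Num.Theory.
Local Open Scope classical_set_scope.
Local Open Scope ring_scope.

Definition Omega : Type := {s : nat -> bool | s 0%N = false}.

Definition Omegan (n : nat) : finType :=
  {f : {ffun 'I_n.+1 -> bool} | f ord0 == false}.

Section Defs.
Variable R : realType.

Local Notation C := (complex.complex R).
Definition iC : C := complex.Complex 0 1.

(* |alpha_k - alpha_{k-1}| for 1 <= k <= n, with alpha, indices as nat *)
Definition jump (n : nat) (w : Omegan n) (k : nat) : nat :=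
  (sval w (inord k) != sval w (inord k.-1)).

Definition Dn (n : nat) (w w' : Omegan n) : C :=
  (2 ^+ n)^-1 *
  (\prod_(1 <= k < n.+1) iC ^+ jump w k) *
  (\prod_(1 <= k < n.+1) iC ^- jump w' k) *
  (if sval w ord_max == sval w' ord_max then 1 else 0).

(* mu_n(E) = sum_{w,w' in E} D^n(w,w'); this complex number is real,
   and we record its real part as the (real-valued) mu_n. *)
Definition mun (n : nat) (E : {set Omegan n}) : R :=
  complex.Re (\sum_(w in E) \sum_(w' in E) Dn w w').

Lemma prefix_proof (n : nat) (w : Omega) :
  [ffun k : 'I_n.+1 => sval w k] ord0 == false.
Proof. by rewrite ffunE /=; case: w => s /= ->. Qed.

Definition prefix (n : nat) (w : Omega) : Omegan n :=
  exist _ [ffun k : 'I_n.+1 => sval w k] (prefix_proof n w).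

Definition cyl (n : nat) (E : {set Omegan n}) : set Omega :=
  [set w | prefix n w \in E].

Definition Cyl : set (set Omega) :=
  [set A | exists n (E : {set Omegan n}), A = cyl E].

(* mu on cylinder sets: mu(A) = mu_n(E) for any representation A = cyl n E
   (well defined by the paper; we pick one representation); 0 off cylinder sets. *)
Definition mu (A : set Omega) : R :=
  match pselect (exists nE : {n : nat & {set Omegan n}}, A = cyl (projT2 nE)) with
  | left h => let nE := projT1 (cid h) in mun (projT2 nE)
  | right _ => 0
  end.

Definition up (n : nat) (A : set Omega) : set Omega :=
  [set w | exists2 w', A w' & forall k, (k <= n)%N -> sval w k = sval w' k].

Definition beneficial (A : set Omega) : Prop :=
  exists l : R, (fun n => mu (up n A)) @ \oo --> l.

Definition muhat (A : set Omega) : R := limn (fun n => mu (up n A)).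

Definition Bset : set (set Omega) := [set A | beneficial A].

Definition inner (n : nat) (A : set Omega) : set Omega := ~` up n (~` A).

Definition upper (A : set Omega) : Prop := A = \bigcup_n inner n A.

Definition Uset : set (set Omega) := [set A | upper A].

Definition BUset : set (set Omega) :=
  [set A | upper A /\ exists l : R, (fun n => mu (inner n A)) @ \oo --> l].

Definition strongly_disjoint (A B : set Omega) : Prop :=
  exists n, up n A `&` up n B = set0.

Definition weak_quadratic_algebra (Q : set (set Omega)) : Prop :=
  Q set0 /\ Q setT /\
  forall A B C, Q A -> Q B -> Q C ->
    strongly_disjoint A B -> strongly_disjoint A C -> strongly_disjoint B C ->
    Q (A `|` B) -> Q (A `|` C) -> Q (B `|` C) -> Q (A `|` B `|` C).

Definition q_measure (Q : set (set Omega)) (nu : set Omega -> R) : Prop :=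
  (forall A, Q A -> 0 <= nu A) /\
  forall A B C, Q A -> Q B -> Q C ->
    strongly_disjoint A B -> strongly_disjoint A C -> strongly_disjoint B C ->
    Q (A `|` B) -> Q (A `|` C) -> Q (B `|` C) ->
    nu (A `|` B `|` C) =
      nu (A `|` B) + nu (A `|` C) + nu (B `|` C) - nu A - nu B - nu C.

End Defs.

(* Writing a path's amplitude as i^(number of jumps), the decoherence functional
   factors as D^n(x,y) = 2^-n sum_b f_b(x) conj(f_b(y)) with f_b(x) = [x_n = b] amp(x),
   so mu_n(E) = 2^-n sum_b |sum_(x in E) f_b(x)|^2 >= 0; being a quadratic form in the
   indicator of E, mu_n also satisfies the grade-2 additivity identity on disjoint sets.
   Summing D^(n+1) over the four one-step continuations of x and y gives back D^n(x,y)
   (the two phases cancel unless x_n = y_n), so mu is well defined on cylinder sets.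
   For pairwise strongly disjoint A, B, C, the sets A^(n) and their inner counterparts
   Omega \ (Omega \ A)^(n) are, for large n, pairwise disjoint level-n cylinder sets that
   distribute over unions; the grade-2 identity therefore holds along the sequences
   mu(A^(n)) and passes to their limits. *)

From Pilot Require Import Defs.
From HB Require Import structures.
From mathcomp Require Import all_boot all_order all_algebra.
From mathcomp Require Import all_classical all_reals all_analysis.
From mathcomp Require Import complex ring.
Import ComplexField.
Import numFieldNormedType.Exports.
Set Implicit Arguments. Unset Strict Implicit. Unset Printing Implicit Defensive.
Import Order.TTheory GRing.Theory Num.Theory.
Local Open Scope ring_scope.

Definition bit n (x : Omegan n) (k : nat) : bool := sval x (inord k).

Lemma bit0 n (x : Omegan n) : bit x 0 = false.
Proof. by rewrite /bit; case: x => f /= /eqP <-; congr (f _); apply/val_inj/inordK. Qed.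

Lemma bit_last n (x : Omegan n) : sval x ord_max = bit x n.
Proof. by rewrite /bit; congr (sval x _); apply/val_inj; rewrite /= inordK. Qed.

Lemma Omegan_ext n (x y : Omegan n) :
  (forall k, (k <= n)%N -> bit x k = bit y k) -> x = y.
Proof.
by move=> h; apply/val_inj/ffunP => k; have := h k (ltn_ord k); rewrite /bit inord_val.
Qed.

Definition eq_upto n (z z' : Omega) := forall k, (k <= n)%N -> sval z k = sval z' k.

Lemma bit_prefix n z k : (k <= n)%N -> bit (Defs.prefix n z) k = sval z k.
Proof. by move=> hk; rewrite /bit /= ffunE inordK. Qed.

Lemma prefix_eq_upto n z z' : eq_upto n z z' -> Defs.prefix n z = Defs.prefix n z'.
Proof. by move=> h; apply: Omegan_ext => k hk; rewrite !bit_prefix // h. Qed.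

Lemma pad0_proof n (x : Omegan n) :
  (fun k => if (k <= n)%N then bit x k else false) 0%N = false.
Proof. by rewrite /= bit0. Qed.

Definition pad0 n (x : Omegan n) : Omega := exist _ _ (pad0_proof x).

Lemma pad0E n (x : Omegan n) k : (k <= n)%N -> sval (pad0 x) k = bit x k.
Proof. by move=> hk; rewrite /= hk. Qed.

Lemma prefix_pad0 n (x : Omegan n) : Defs.prefix n (pad0 x) = x.
Proof. by apply: Omegan_ext => k hk; rewrite bit_prefix // pad0E. Qed.

Lemma eq_upto_pad0_prefix n z : eq_upto n z (pad0 (Defs.prefix n z)).
Proof. by move=> k hk; rewrite pad0E // bit_prefix. Qed.

Lemma snoc_proof n (x : Omegan n) (a : bool) :
  [ffun k : 'I_n.+2 => if (k <= n)%N then bit x k else a] ord0 == false.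
Proof. by rewrite ffunE /= bit0. Qed.

Definition snoc n (x : Omegan n) a : Omegan n.+1 :=
  exist (fun f : {ffun 'I_n.+2 -> bool} => f ord0 == false) _ (snoc_proof x a).

Lemma restr_proof n (v : Omegan n.+1) : [ffun k : 'I_n.+1 => bit v k] ord0 == false.
Proof. by rewrite ffunE bit0. Qed.

Definition restr n (v : Omegan n.+1) : Omegan n :=
  exist (fun f : {ffun 'I_n.+1 -> bool} => f ord0 == false) _ (restr_proof v).

Lemma bit_snoc n (x : Omegan n) a k : (k <= n.+1)%N ->
  bit (snoc x a) k = if (k <= n)%N then bit x k else a.
Proof. by move=> hk; rewrite /bit /= ffunE inordK. Qed.

Lemma bit_snoc_last n (x : Omegan n) a : bit (snoc x a) n.+1 = a.
Proof. by rewrite bit_snoc // ltnn. Qed.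

Lemma bit_restr n (v : Omegan n.+1) k : (k <= n)%N -> bit (restr v) k = bit v k.
Proof. by move=> hk; rewrite {1}/bit /= ffunE inordK. Qed.

Lemma snocK n (x : Omegan n) a : restr (snoc x a) = x.
Proof. by apply: Omegan_ext => k hk; rewrite bit_restr // bit_snoc ?hk ?leqW. Qed.

Lemma restrK n (v : Omegan n.+1) : snoc (restr v) (bit v n.+1) = v.
Proof.
apply: Omegan_ext => k hk; rewrite bit_snoc //; case: ifP => hkn; first by rewrite bit_restr.
by have -> : k = n.+1 by apply/eqP; rewrite eqn_leq hk ltnNge hkn.
Qed.

Section Amplitude.
Variable R : realType.
Local Notation C := R[i].
Local Notation i := (iC R).

Lemma iC_sqr : i * i = -1.
Proof. by apply/eqP; rewrite eq_complex /= !(mulr0, mul0r, mulr1, sub0r, addr0, oppr0) !eqxx. Qed.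

Lemma conj_iC : i^*%C = - i.
Proof. by apply/eqP; rewrite eq_complex /= oppr0 !eqxx. Qed.

Lemma conj_iCV : i^*%C = i^-1.
Proof.
have i_neq0 : i != 0.
  by apply/eqP => i0; move: iC_sqr; rewrite i0 mul0r => /eqP; rewrite eq_sym oppr_eq0 oner_eq0.
by apply: (mulfI i_neq0); rewrite conj_iC mulrN iC_sqr opprK divff.
Qed.

Lemma conj_iCX k : (i ^+ k)^*%C = (- i) ^+ k.
Proof. by rewrite rmorphXn; congr (_ ^+ _); exact: conj_iC. Qed.

Lemma jumpE n (x : Omegan n) k : jump x k = (bit x k != bit x k.-1) :> nat.
Proof. by []. Qed.

Lemma jump_snoc n (x : Omegan n) a k : (k <= n)%N -> jump (snoc x a) k = jump x k.
Proof.
move=> hk; have hk1 : (k.-1 <= n)%N by rewrite (leq_trans (leq_pred k) hk).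
by rewrite !jumpE !bit_snoc ?hk ?hk1 ?leqW.
Qed.

Lemma jump_snoc_last n (x : Omegan n) a : jump (snoc x a) n.+1 = (a != bit x n) :> nat.
Proof. by rewrite jumpE bit_snoc_last bit_snoc // leqnn. Qed.

Definition amp n (x : Omegan n) : C := \prod_(1 <= k < n.+1) i ^+ jump x k.

Lemma amp_snoc n (x : Omegan n) a : amp (snoc x a) = amp x * i ^+ (a != bit x n).
Proof.
rewrite /amp big_nat_recr //= jump_snoc_last; congr (_ * _).
by apply: eq_big_nat => k /andP [_ hk]; rewrite jump_snoc.
Qed.

Lemma DnE n (x y : Omegan n) :
  Dn R x y = (2 ^+ n)^-1 * amp x * (amp y)^*%C * (bit x n == bit y n)%:R.
Proof.
rewrite /Dn !bit_last rmorph_prod; congr (_ * _ * _); last by case: eqP.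
by apply: eq_bigr => k _; rewrite rmorphXn -exprVn; congr (_ ^+ _); apply/esym/conj_iCV.
Qed.

Lemma step_phase_orth (b c : bool) :
  \sum_(a : bool) i ^+ (a != b) * (i ^+ (a != c))^*%C = 2 * (b == c)%:R.
Proof.
rewrite big_bool !conj_iCX; case: b; case: c => /=;
  rewrite ?expr0 ?expr1 ?mulr1 ?mul1r ?mulr0 ?mulrN ?iC_sqr ?opprK ?addrN ?addNr //.
Qed.

Lemma Dn_snoc n (x y : Omegan n) a b :
  Dn R (snoc x a) (snoc y b) = (2 ^+ n.+1)^-1 * amp x * (amp y)^*%C *
    (i ^+ (a != bit x n) * (i ^+ (b != bit y n))^*%C * (a == b)%:R).
Proof. by rewrite DnE !amp_snoc !bit_snoc_last rmorphM; ring. Qed.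

Lemma sum_Dn_snoc n (x y : Omegan n) :
  \sum_(a : bool) \sum_(b : bool) Dn R (snoc x a) (snoc y b) = Dn R x y.
Proof.
have sum_b a : \sum_(b : bool) Dn R (snoc x a) (snoc y b) =
    (2 ^+ n.+1)^-1 * amp x * (amp y)^*%C * (i ^+ (a != bit x n) * (i ^+ (a != bit y n))^*%C).
  by rewrite big_bool !Dn_snoc; case: a; rewrite /= ?mulr1 ?mulr0 ?addr0 ?add0r.
under eq_bigr => a _ do rewrite sum_b.
rewrite -mulr_sumr step_phase_orth DnE exprS invfM.
have two_neq0 : (2 : C) != 0 by rewrite pnatr_eq0.
by field; exact: expf_neq0.
Qed.
End Amplitude.

Section QuadraticForm.
Variables (T : finType) (V : comPzRingType) (D : T -> T -> V).

Definition qform (A : {set T}) : V := \sum_(x in A) \sum_(y in A) D x y.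

Let bform (A B : {set T}) : V := \sum_(x in A) \sum_(y in B) D x y.

Let sum_setU (f : T -> V) (A B : {set T}) : [disjoint A & B] ->
  \sum_(x in A :|: B) f x = \sum_(x in A) f x + \sum_(x in B) f x.
Proof. by move=> AB; rewrite -bigU //; apply: eq_bigl => x; rewrite !inE. Qed.

Let bformUl (A B X : {set T}) : [disjoint A & B] -> bform (A :|: B) X = bform A X + bform B X.
Proof. exact: sum_setU. Qed.

Let bformUr (A B X : {set T}) : [disjoint A & B] -> bform X (A :|: B) = bform X A + bform X B.
Proof. by move=> AB; rewrite /bform -big_split; apply: eq_bigr => x _; rewrite sum_setU. Qed.

Lemma qform_quad (A B C : {set T}) :
  [disjoint A & B] -> [disjoint A & C] -> [disjoint B & C] ->
  qform (A :|: B :|: C) =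
    qform (A :|: B) + qform (A :|: C) + qform (B :|: C) - qform A - qform B - qform C.
Proof.
move=> AB AC BC; have ABC : [disjoint A :|: B & C].
  by rewrite -setI_eq0 finset.setIUl !disjoint_setI0 // finset.setU0.
rewrite /qform -!/(bform _ _) !(bformUl, bformUr) //; ring.
Qed.

End QuadraticForm.

Lemma double_sum_mulJ (R : rcfType) (T : finType) (E : {pred T}) (f : T -> R[i]) :
  \sum_(x in E) \sum_(y in E) f x * (f y)^*%C = (\sum_(x in E) f x) * (\sum_(x in E) f x)^*%C.
Proof. by rewrite rmorph_sum big_distrlr. Qed.

Section FiniteMeasure.
Variable R : realType.

Lemma Dn_bit_sum n (x y : Omegan n) : Dn R x y =
  (2 ^+ n)^-1 * \sum_(b : bool) ((bit x n == b)%:R * amp R x) * ((bit y n == b)%:R * amp R y)^*%C.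
Proof.
by rewrite DnE big_bool !rmorphM !rmorph_nat; case: (bit x n); case: (bit y n) => /=; ring.
Qed.

Lemma qform_Dn_ge0 n (E : {set Omegan n}) : 0 <= qform (@Dn R n) E.
Proof.
pose f b (x : Omegan n) := (bit x n == b)%:R * amp R x.
have -> : qform (@Dn R n) E =
    (2 ^+ n)^-1 * \sum_(b : bool) (\sum_(x in E) f b x) * (\sum_(x in E) f b x)^*%C.
  transitivity ((2 ^+ n)^-1 * \sum_(b : bool) \sum_(x in E) \sum_(y in E) f b x * (f b y)^*%C).
    rewrite [X in _ = _ * X]exchange_big mulr_sumr; apply: eq_bigr => x _.
    by rewrite exchange_big mulr_sumr; apply: eq_bigr => y _; exact: Dn_bit_sum.
  by congr (_ * _); apply: eq_bigr => b _; rewrite double_sum_mulJ.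
by rewrite mulr_ge0 ?invr_ge0 ?exprn_ge0 ?ler0n // sumr_ge0 // => b _; exact: mulcJ_ge0.
Qed.

Lemma mun_ge0 n (E : {set Omegan n}) : 0 <= mun R E.
Proof. by have := qform_Dn_ge0 E; rewrite lecE => /andP [_]. Qed.

Lemma mun_quad n (E F G : {set Omegan n}) :
  [disjoint E & F] -> [disjoint E & G] -> [disjoint F & G] ->
  mun R (E :|: F :|: G) = mun R (E :|: F) + mun R (E :|: G) + mun R (F :|: G)
    - mun R E - mun R F - mun R G.
Proof. by move=> EF EG FG; rewrite /mun -!/(qform _ _) qform_quad // !raddfB !raddfD. Qed.

End FiniteMeasure.

Lemma sum_preim_restr (V : nmodType) n (E : {set Omegan n}) (f : Omegan n.+1 -> V) :
  \sum_(v in @restr n @^-1: E) f v = \sum_(x in E) \sum_(a : bool) f (snoc x a).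
Proof.
rewrite (partition_big (@restr n) (mem E)) => [|v]; last by rewrite inE.
apply: eq_bigr => x xE; rewrite (reindex_onto (snoc x) (fun v => bit v n.+1)).
  by apply: eq_bigl => a; rewrite bit_snoc_last inE /= !snocK !eqxx !andbT.
by move=> v /andP [_ /eqP <-]; rewrite restrK.
Qed.

Lemma mun_preim_restr (R : realType) n (E : {set Omegan n}) :
  mun R (@restr n @^-1: E) = mun R E.
Proof.
rewrite /mun sum_preim_restr; congr complex.Re; apply: eq_bigr => x _.
under eq_bigr => a _ do rewrite sum_preim_restr.
by rewrite exchange_big; apply: eq_bigr => y _; rewrite sum_Dn_snoc.
Qed.

Local Open Scope classical_set_scope.

Definition cyl_at n (X : set Omega) : Prop := forall z z', eq_upto n z z' -> X z -> X z'.

Lemma cyl_at_cyl n (E : {set Omegan n}) : cyl_at n (cyl E).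
Proof. by move=> z z' h; rewrite /cyl /= (prefix_eq_upto h). Qed.

Lemma cyl_at_le m n X : (m <= n)%N -> cyl_at m X -> cyl_at n X.
Proof. by move=> mn hX z z' h; apply: hX => k km; apply: h; exact: leq_trans mn. Qed.

Lemma cyl_atC n X : cyl_at n X -> cyl_at n (~` X).
Proof. by move=> hX z z' h Xz Xz'; apply/Xz/(hX z') => // k kn; rewrite h. Qed.

Lemma cyl_atE n X : cyl_at n X -> X = cyl [set x : Omegan n | `[< X (pad0 x) >]]%SET.
Proof.
move=> hX; apply/seteqP; split => z; rewrite /cyl /= inE asboolE.
  exact: hX (@eq_upto_pad0_prefix n z).
by apply: hX => k kn; rewrite (@eq_upto_pad0_prefix n z k kn).
Qed.

Lemma cyl_inj n : injective (@cyl n).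
Proof.
move=> E F EF; apply/setP => x; have := congr1 (fun X => X (pad0 x)) EF.
by rewrite /cyl /= prefix_pad0 => e; apply/idP/idP; rewrite e.
Qed.

Lemma restr_prefix n z : restr (Defs.prefix n.+1 z) = Defs.prefix n z.
Proof. by apply: Omegan_ext => k kn; rewrite bit_restr // !bit_prefix ?leqW. Qed.

Lemma cyl_preim_restr n (E : {set Omegan n}) : cyl (@restr n @^-1: E) = cyl E.
Proof. by apply/seteqP; split => z; rewrite /cyl /= inE restr_prefix. Qed.

Section CylinderMeasure.
Variable R : realType.

Lemma mun_cyl_eq m n (E : {set Omegan n}) (F : {set Omegan m}) :
  (n <= m)%N -> cyl F = cyl E -> mun R F = mun R E.
Proof.
elim: m F => [|m IH] F nm FE.
  by move: E FE; rewrite leqn0 in nm; rewrite (eqP nm) => E /cyl_inj ->.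
have [nm'|mn] := leqP n m; last first.
  have en : n = m.+1 by apply/eqP; rewrite eqn_leq nm.
  by subst n; rewrite (cyl_inj FE).
set G := [set x : Omegan m | `[< cyl F (pad0 x) >]]%SET.
have FG : cyl F = cyl G.
  by apply: cyl_atE; rewrite FE; exact: cyl_at_le nm' (@cyl_at_cyl _ E).
have -> : F = @restr m @^-1: G by apply: cyl_inj; rewrite cyl_preim_restr.
by rewrite mun_preim_restr; apply: IH; rewrite // -FG.
Qed.

Lemma mu_cyl n (E : {set Omegan n}) : mu R (cyl E) = mun R E.
Proof.
rewrite /mu; case: pselect => [h|[]]; last by exists (existT _ n E).
case: (cid h) => -[m F] /= FE.
have [nm|mn] := leqP n m; first by apply: mun_cyl_eq.
by apply/esym/mun_cyl_eq; [exact: ltnW|].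
Qed.

End CylinderMeasure.

Lemma cyl_disjoint n (E F : {set Omegan n}) :
  cyl E `&` cyl F = set0 -> [disjoint E & F]%B.
Proof.
move=> EF; apply/pred0P => x /=; apply/negbTE/andP => -[xE xF].
have : (cyl E `&` cyl F) (pad0 x) by split; rewrite /cyl /= prefix_pad0.
by rewrite EF.
Qed.

Lemma cylU n (E F : {set Omegan n}) : cyl E `|` cyl F = cyl (E :|: F).
Proof. by apply/seteqP; split => z; rewrite /cyl /= inE => /orP. Qed.

Section LevelMeasure.
Variable R : realType.

Lemma mu_ge0 X : 0 <= mu R X.
Proof. by rewrite /mu; case: pselect => // h; exact: mun_ge0. Qed.

Lemma mu_quad n X Y Z : cyl_at n X -> cyl_at n Y -> cyl_at n Z ->
  X `&` Y = set0 -> X `&` Z = set0 -> Y `&` Z = set0 ->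
  mu R (X `|` Y `|` Z) =
    mu R (X `|` Y) + mu R (X `|` Z) + mu R (Y `|` Z) - mu R X - mu R Y - mu R Z.
Proof.
move=> /cyl_atE -> /cyl_atE -> /cyl_atE -> /cyl_disjoint XY /cyl_disjoint XZ /cyl_disjoint YZ.
by rewrite !cylU !mu_cyl mun_quad.
Qed.

End LevelMeasure.

Lemma up_cyl_at n A : cyl_at n (up n A).
Proof. by move=> z z' h [w Aw zw]; exists w => // k kn; rewrite -h ?zw. Qed.

Lemma inner_cyl_at n A : cyl_at n (inner n A).
Proof. exact/cyl_atC/up_cyl_at. Qed.

Lemma sub_up n A : A `<=` up n A.
Proof. by move=> z Az; exists z. Qed.

Lemma inner_sub n A : inner n A `<=` A.
Proof. by move=> z +; apply: contra_notP => nAz; exists z. Qed.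

Lemma up_le m n A : (m <= n)%N -> up n A `<=` up m A.
Proof. by move=> mn z [w Aw zw]; exists w => // k km; apply/zw/(leq_trans km). Qed.

Lemma upU n A B : up n (A `|` B) = up n A `|` up n B.
Proof.
apply/seteqP; split => z; first by move=> [w [Aw|Bw] zw]; [left|right]; exists w.
by move=> [[w Aw zw]|[w Bw zw]]; exists w => //; [left|right].
Qed.

Lemma inner_subset n A B : A `<=` B -> inner n A `<=` inner n B.
Proof. by move=> AB z zA [w nBw zw]; apply: zA; exists w => // /AB. Qed.

Lemma innerU n A B : up n A `&` up n B = set0 ->
  inner n (A `|` B) = inner n A `|` inner n B.
Proof.
move=> AB; apply/seteqP; split => z; last first.
  by case; apply: inner_subset => x hx; [left|right].
have key X Y : up n X `&` up n Y = set0 -> inner n (X `|` Y) z -> X z -> inner n X z.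
  move=> XY zXY Xz [w nXw zw].
  have [/nXw//|Yw] : (X `|` Y) w by apply: contrapT => nXYw; apply: zXY; exists w.
  have : (up n X `&` up n Y) z by split; [exact: sub_up|exists w].
  by rewrite XY.
move=> zAB; have [Az|Bz] := inner_sub zAB; first by left; exact: (key A B).
by right; apply: (key B A); rewrite 1?setIC 1?setUC.
Qed.

Lemma inner_disj n A B : up n A `&` up n B = set0 -> inner n A `&` inner n B = set0.
Proof.
move=> AB; rewrite -subset0 => z [zA zB].
by rewrite -AB; split; [exact: sub_up (inner_sub zA)|exact: sub_up (inner_sub zB)].
Qed.

Lemma up0 n : up n set0 = set0.
Proof. by rewrite -subset0 => z []. Qed.

Lemma upT n : up n setT = setT.
Proof. by rewrite -subTset; exact: sub_up. Qed.

Lemma inner0 n : inner n set0 = set0.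
Proof. by rewrite -subset0; exact: inner_sub. Qed.

Lemma innerT n : inner n setT = setT.
Proof. by rewrite /inner setCT up0 setC0. Qed.

Lemma up_cyl_at_id m n X : cyl_at n X -> (n <= m)%N -> up m X = X.
Proof.
move=> hX nm; apply/seteqP; split; last exact: sub_up.
by move=> z [w Xw zw]; apply: hX Xw => k kn; rewrite zw // (leq_trans kn).
Qed.

Lemma upperU A B : upper A -> upper B -> upper (A `|` B).
Proof.
move=> hA hB; apply/seteqP; split => [z|z [n _ /inner_sub //]].
case=> [Az|Bz].
- have [n _ zA] : (\bigcup_n inner n A) z by rewrite -hA.
  by exists n => //; apply: inner_subset zA => x; left.
- have [n _ zB] : (\bigcup_n inner n B) z by rewrite -hB.
  by exists n => //; apply: inner_subset zB => x; right.
Qed.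

Lemma strongly_disjoint_near A B : strongly_disjoint A B ->
  \forall n \near \oo, up n A `&` up n B = set0.
Proof.
move=> [N AB]; exists N => // n /= Nn; rewrite -subset0 => z [zA zB].
by rewrite -AB; split; exact: up_le Nn _ _.
Qed.

Section Approximation.
Variables (R : realType) (a : nat -> set Omega -> set Omega).
Hypothesis a_cyl_at : forall n X, cyl_at n (a n X).
Hypothesis aU : forall n X Y, up n X `&` up n Y = set0 -> a n (X `|` Y) = a n X `|` a n Y.
Hypothesis a_disj : forall n X Y, up n X `&` up n Y = set0 -> a n X `&` a n Y = set0.

Lemma mu_approx_quad n A B C :
  up n A `&` up n B = set0 -> up n A `&` up n C = set0 -> up n B `&` up n C = set0 ->
  mu R (a n (A `|` B `|` C)) = mu R (a n (A `|` B)) + mu R (a n (A `|` C))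
    + mu R (a n (B `|` C)) - mu R (a n A) - mu R (a n B) - mu R (a n C).
Proof.
move=> AB AC BC; have ABC : up n (A `|` B) `&` up n C = set0.
  by rewrite upU setIUl AC BC setU0.
by rewrite (aU ABC) !aU //; apply: mu_quad; rewrite ?a_disj.
Qed.

Lemma cvg_mu_approx_quad A B C lAB lAC lBC lA lB lC :
  strongly_disjoint A B -> strongly_disjoint A C -> strongly_disjoint B C ->
  (fun n => mu R (a n (A `|` B))) @ \oo --> lAB ->
  (fun n => mu R (a n (A `|` C))) @ \oo --> lAC ->
  (fun n => mu R (a n (B `|` C))) @ \oo --> lBC ->
  (fun n => mu R (a n A)) @ \oo --> lA ->
  (fun n => mu R (a n B)) @ \oo --> lB ->
  (fun n => mu R (a n C)) @ \oo --> lC ->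
  (fun n => mu R (a n (A `|` B `|` C))) @ \oo --> lAB + lAC + lBC - lA - lB - lC.
Proof.
move=> /strongly_disjoint_near AB /strongly_disjoint_near AC /strongly_disjoint_near BC.
move=> hAB hAC hBC hA hB hC.
apply: cvg_trans (cvgB (cvgB (cvgB (cvgD (cvgD hAB hAC) hBC) hA) hB) hC).
apply: near_eq_cvg; near=> n; rewrite /= mu_approx_quad //; by near: n.
Unshelve. all: by end_near.
Qed.

End Approximation.

Lemma cvg_mu_up_cyl (R : realType) n (E : {set Omegan n}) :
  (fun m => mu R (up m (cyl E))) @ \oo --> mu R (cyl E).
Proof.
apply: cvg_near_cst; exists n => // m /= nm.
by rewrite (up_cyl_at_id (@cyl_at_cyl _ E) nm).
Qed.

Section BeneficialSets.
Variable R : realType.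

Let mu_fixed (a : nat -> set Omega -> set Omega) X :
  (forall n, a n X = X) -> (fun n => mu R (a n X)) @ \oo --> mu R X.
Proof. by move=> aX; under eq_fun do rewrite aX; exact: cvg_cst. Qed.

Let up_quad := cvg_mu_approx_quad (R := R) (@up_cyl_at)
  (fun n X Y _ => upU n X Y) (fun n X Y => id).

Lemma weak_quadratic_algebra_Bset : weak_quadratic_algebra (Bset R).
Proof.
split; [|split]; first by exists (mu R set0); exact: mu_fixed up0.
  by exists (mu R setT); exact: mu_fixed upT.
move=> A B C [lA hA] [lB hB] [lC hC] AB AC BC [lAB hAB] [lAC hAC] [lBC hBC].
by eexists; exact: up_quad hAB hAC hBC hA hB hC.
Qed.

Lemma weak_quadratic_algebra_BUset : weak_quadratic_algebra (BUset R).
Proof.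
have inner_quad := cvg_mu_approx_quad (R := R) (@inner_cyl_at) (@innerU) (@inner_disj).
split; [|split].
- split; last by exists (mu R set0); exact: mu_fixed inner0.
  by apply/seteqP; split => [//|z [n _]]; rewrite inner0.
- split; last by exists (mu R setT); exact: mu_fixed innerT.
  by apply/seteqP; split => // z _; exists 0%N => //; rewrite innerT.
- move=> A B C [uA [lA hA]] [uB [lB hB]] [uC [lC hC]] AB AC BC
    [_ [lAB hAB]] [_ [lAC hAC]] [_ [lBC hBC]].
  split; first by apply: upperU => //; exact: upperU.
  by eexists; exact: inner_quad hAB hAC hBC hA hB hC.
Qed.

Lemma q_measure_muhat : q_measure (Bset R) (@muhat R).
Proof.
split.
  move=> A [l hl]; apply: limr_ge; first by apply/cvg_ex; exists l.
  by apply: nearW => n; exact: mu_ge0.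
move=> A B C [lA hA] [lB hB] [lC hC] AB AC BC [lAB hAB] [lAC hAC] [lBC hBC].
have limE (u : nat -> R) l : u @ \oo --> l -> limn u = l by exact: cvg_lim.
rewrite /muhat (limE _ _ (up_quad AB AC BC hAB hAC hBC hA hB hC)).
by rewrite (limE _ _ hAB) (limE _ _ hAC) (limE _ _ hBC) (limE _ _ hA) (limE _ _ hB) (limE _ _ hC).
Qed.

Lemma Cyl_sub_Bset : Cyl `<=` Bset R.
Proof. by move=> A [n [E ->]]; exists (mu R (cyl E)); exact: cvg_mu_up_cyl. Qed.

Lemma muhat_Cyl A : Cyl A -> muhat R A = mu R A.
Proof. by move=> [n [E ->]]; apply/cvg_lim/cvg_mu_up_cyl. Qed.

End BeneficialSets.

Theorem theorem4p7 (R : realType) :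
  weak_quadratic_algebra (Bset R) /\
  weak_quadratic_algebra (BUset R) /\
  q_measure (Bset R) (@muhat R) /\
  Cyl `<=` Bset R /\
  (forall A, Cyl A -> muhat R A = mu R A).
Proof.
split; first exact: weak_quadratic_algebra_Bset.
split; first exact: weak_quadratic_algebra_BUset.
split; first exact: q_measure_muhat.
split; [exact: Cyl_sub_Bset | exact: muhat_Cyl].
Qed.
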